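(* Let $R$ be a Noetherian ring and $\Gamma$ a finitely generated group with a word metric. Let $\phi\colon F\to F'$ be an $R[\Gamma]$-homomorphism between finitely generated $R[\Gamma]$-modules, and let $\Sigma_F$, $\Sigma_{F'}$ be arbitrary finite generating sets of $F$ and $F'$. Then $\phi$ is boundedly controlled as an $R$-linear homomorphism of $\Gamma$-filtered $R$-modules $s(F,\Sigma_F)\to s(F',\Sigma_{F'})$.
   Context: For a subset $S\subset\Gamma$ and $b\ge0$, $S[b]$ is the metric $b$-enlargement of $S$ in the word metric. A $\Gamma$-filtered $R$-module is an $R$-module $F$ with an inclusion-preserving assignment $S\mapsto F(S)$ of $R$-submodules to subsets $S\subset\Gamma$ with $F(\Gamma)=F$. For a finitely generated $R[\Gamma]$-module $F$ with finite generating set $\Sigma$, $s(F,\Sigma)$ is the $\Gamma$-filtered $R$-module with $F(S)$ the $R$-submodule generated by $\{s\sigma : s\in S,\ \sigma\in\Sigma\}$. An $R$-homomorphism $f\colon F\to F'$ of filtered modules is boundedly controlled if there is $b\ge 0$ with $f(F(S))\subset F'(S[b])$ for all $S\subset\Gamma$. *)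

From HB Require Import structures.
From mathcomp Require Import all_boot all_order all_algebra.
Set Implicit Arguments. Unset Strict Implicit. Unset Printing Implicit Defensive.
Import GRing.Theory.

Local Open Scope ring_scope.

Definition left_ideal (R : pzRingType) (I : R -> Prop) : Prop :=
  [/\ I 0, (forall x y, I x -> I y -> I (x + y)) & (forall r x, I x -> I (r * x))].

Definition in_left_ideal_gen (R : pzRingType) (s : seq R) (x : R) : Prop :=
  exists c : seq R, size c = size s /\ x = \sum_(i < size s) c`_i * s`_i.

Definition noetherian (R : pzRingType) : Prop :=
  forall I : R -> Prop, left_ideal I ->
    exists s : seq R, forall x, I x <-> in_left_ideal_gen s x.

Section Groups.
Variable G : groupType.
Local Open Scope group_scope.

Definition is_word (gens : seq G) (w : seq G) : Prop :=
  forall x, x \in w -> (x \in gens) \/ (x^-1 \in gens).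

Definition generates (gens : seq G) : Prop :=
  forall g : G, exists w, is_word gens w /\ g = \prod_(x <- w) x.

(* word metric: d(g,h) <= n  iff  g^-1 h is a product of at most n
   generators or inverses of generators. *)
Definition word_dist_le (gens : seq G) (g h : G) (n : nat) : Prop :=
  exists w, is_word gens w /\ (size w <= n)%N /\ g^-1 * h = \prod_(x <- w) x.

Definition enlarge (gens : seq G) (S : G -> Prop) (b : nat) : G -> Prop :=
  fun h => exists2 s, S s & word_dist_le gens s h b.

End Groups.

(* An R[G]-module structure on an R-module F: an action of G on F by
   R-linear maps. *)
Definition is_RG_action (R : pzRingType) (G : groupType) (F : lmodType R)
    (act : G -> F -> F) : Prop :=
  [/\ (forall g (r : R) (x y : F), act g (r *: x + y) = r *: act g x + act g y),
      (forall x, act 1%g x = x) &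
      (forall g h x, act (g * h)%g x = act g (act h x))].

Definition in_Rspan (R : pzRingType) (F : lmodType R) (P : F -> Prop) (x : F)
    : Prop :=
  exists l : seq (R * F), (forall p, p \in l -> P p.2) /\
    x = \sum_(p <- l) p.1 *: p.2.

(* The G-filtered R-module s(F, Sigma):  F(S) = R-span of {s sigma}. *)
Definition sfilt (R : pzRingType) (G : groupType) (F : lmodType R)
    (act : G -> F -> F) (Sigma : seq F) (S : G -> Prop) : F -> Prop :=
  in_Rspan (fun v => exists s, exists2 sg, sg \in Sigma & S s /\ v = act s sg).

Definition RG_generates (R : pzRingType) (G : groupType) (F : lmodType R)
    (act : G -> F -> F) (Sigma : seq F) : Prop :=
  forall x : F, sfilt act Sigma (fun _ => True) x.

Definition is_RG_hom (R : pzRingType) (G : groupType) (F F' : lmodType R)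
    (act : G -> F -> F) (act' : G -> F' -> F') (phi : F -> F') : Prop :=
  (forall (r : R) x y, phi (r *: x + y) = r *: phi x + phi y) /\
  (forall g x, phi (act g x) = act' g (phi x)).

Definition boundedly_controlled (R : pzRingType) (G : groupType)
    (gens : seq G) (F F' : lmodType R) (FS : (G -> Prop) -> F -> Prop)
    (FS' : (G -> Prop) -> F' -> Prop) (f : F -> F') : Prop :=
  exists b : nat, forall (S : G -> Prop) (x : F),
    FS S x -> FS' (enlarge gens S b) (f x).

From HB Require Import structures.
From mathcomp Require Import all_boot all_order all_algebra.
Import GRing.Theory.
Local Open Scope ring_scope.

(* By equivariance, phi (s sigma) is then a combination of
   s t sigma' with d(s, s t) <= b, so phi maps F(S) into F'(S[b]). *)

Set Implicit Arguments. Unset Strict Implicit.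

Section RSpan.
Variable R : pzRingType.

Definition Rlinear (F F' : lmodType R) (f : F -> F') : Prop :=
  forall r x y, f (r *: x + y) = r *: f x + f y.

Lemma in_Rspan0 (F : lmodType R) (P : F -> Prop) : in_Rspan P 0.
Proof. by exists [::]; split => //; rewrite big_nil. Qed.

Lemma in_RspanD (F : lmodType R) (P : F -> Prop) x y :
  in_Rspan P x -> in_Rspan P y -> in_Rspan P (x + y).
Proof.
move=> [l1 [P1 ->]] [l2 [P2 ->]]; exists (l1 ++ l2); split.
  by move=> p; rewrite mem_cat => /orP [/P1|/P2].
by rewrite big_cat.
Qed.

Lemma in_RspanZ (F : lmodType R) (P : F -> Prop) r x :
  in_Rspan P x -> in_Rspan P (r *: x).
Proof.
move=> [l [Pl ->]]; exists [seq (r * p.1, p.2) | p <- l]; split.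
  by move=> _ /mapP [q lq ->] /=; apply: Pl.
by rewrite big_map scaler_sumr; apply: eq_bigr => p _; rewrite scalerA.
Qed.

Lemma in_Rspan_gen (F : lmodType R) (P : F -> Prop) v : P v -> in_Rspan P v.
Proof.
move=> Pv; exists [:: (1, v)]; split; last by rewrite big_seq1 scale1r.
by move=> p; rewrite inE => /eqP ->.
Qed.

Lemma in_Rspan_sub (F : lmodType R) (P Q : F -> Prop) x :
  (forall v, P v -> Q v) -> in_Rspan P x -> in_Rspan Q x.
Proof. by move=> PQ [l [Pl ->]]; exists l; split => // p /Pl /PQ. Qed.

Lemma in_Rspan_lincomb (F : lmodType R) (Q : F -> Prop) (l : seq (R * F)) :
  (forall p, p \in l -> in_Rspan Q p.2) ->
  in_Rspan Q (\sum_(p <- l) p.1 *: p.2).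
Proof.
elim: l => [|p l IHl] Ql; first by rewrite big_nil; apply: in_Rspan0.
rewrite big_cons; apply: in_RspanD; first by apply/in_RspanZ/Ql/mem_head.
by apply: IHl => q lq; apply: Ql; rewrite inE lq orbT.
Qed.

Lemma Rlinear0 (F F' : lmodType R) (f : F -> F') : Rlinear f -> f 0 = 0.
Proof.
move=> lin_f; have := lin_f 1 0 0; rewrite !scale1r addr0 => f00.
by apply: (@addrI _ (f 0)); rewrite addr0 -f00.
Qed.

Lemma Rlinear_sum (F F' : lmodType R) (f : F -> F') (l : seq (R * F)) :
  Rlinear f -> f (\sum_(p <- l) p.1 *: p.2) = \sum_(p <- l) p.1 *: f p.2.
Proof.
move=> lin_f; elim: l => [|p l IHl]; first by rewrite !big_nil Rlinear0.
by rewrite !big_cons lin_f IHl.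
Qed.

Lemma in_Rspan_image (F F' : lmodType R) (P : F -> Prop) (Q : F' -> Prop)
    (f : F -> F') x :
  Rlinear f -> (forall v, P v -> in_Rspan Q (f v)) ->
  in_Rspan P x -> in_Rspan Q (f x).
Proof.
move=> lin_f PQ [l [Pl ->]]; rewrite Rlinear_sum //.
rewrite -(big_map (fun p => (p.1, f p.2)) xpredT (fun p => p.1 *: p.2)).
by apply: in_Rspan_lincomb => q /mapP [p lp ->]; apply/PQ/Pl.
Qed.

End RSpan.

Lemma uniform_nat_bound (T : eqType) (P : nat -> T -> Prop) (s : seq T) :
  (forall b b' x, (b <= b')%N -> P b x -> P b' x) ->
  (forall x, x \in s -> exists b, P b x) ->
  exists b, forall x, x \in s -> P b x.
Proof.
move=> P_mono; elim: s => [|y s IHs] Ps; first by exists 0%N.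
have [b Pb] := IHs (fun x sx => Ps x (mem_behead (s := y :: s) sx)).
have [b' Pb'] := Ps y (mem_head _ _).
exists (maxn b b') => x; rewrite inE => /orP [/eqP ->|/Pb].
  by apply: P_mono Pb'; rewrite leq_maxr.
by apply: P_mono; rewrite leq_maxl.
Qed.

Section WordMetric.
Variables (G : groupType) (gens : seq G).
Local Open Scope group_scope.

Definition word_ball (b : nat) : G -> Prop := fun g => word_dist_le gens 1 g b.

Lemma word_dist_le_mono g h n m :
  (n <= m)%N -> word_dist_le gens g h n -> word_dist_le gens g h m.
Proof.
by move=> le_nm [w [gw [le_w gh_w]]]; exists w; rewrite (leq_trans le_w).
Qed.

Lemma generates_word_ball : generates gens -> forall g, exists b, word_ball b g.
Proof.
move=> gen g; have [w [gw ->]] := gen g.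
by exists (size w), w; rewrite invg1 mul1g.
Qed.

Lemma word_ball_enlarge (S : G -> Prop) s t b :
  S s -> word_ball b t -> enlarge gens S b (s * t).
Proof.
move=> Ss [w [gw [le_w t_w]]]; exists s => //; exists w.
by rewrite mulKg -t_w invg1 mul1g.
Qed.

End WordMetric.

Section Filtration.
Variables (R : pzRingType) (G : groupType) (F : lmodType R).
Variables (act : G -> F -> F) (Sigma : seq F).

Lemma sfilt_sub (S T : G -> Prop) x :
  (forall g, S g -> T g) -> sfilt act Sigma S x -> sfilt act Sigma T x.
Proof.
move=> ST; apply: in_Rspan_sub => _ [s [sg Sigma_sg [Ss ->]]].
by exists s, sg => //; split; first exact: ST.
Qed.

Lemma sfilt_word_ball_mono (gens : seq G) b b' x :
  (b <= b')%N -> sfilt act Sigma (word_ball gens b) x ->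
  sfilt act Sigma (word_ball gens b') x.
Proof. by move=> le_b; apply: sfilt_sub => g; apply: word_dist_le_mono. Qed.

Lemma sfilt_word_ball (gens : seq G) :
  generates gens -> RG_generates act Sigma ->
  forall x, exists b, sfilt act Sigma (word_ball gens b) x.
Proof.
move=> gen Sigma_gen x; have [l [l_gen ->]] := Sigma_gen x.
have [b lb] : exists b, forall p, p \in l ->
    sfilt act Sigma (word_ball gens b) p.2.
  apply: uniform_nat_bound => [? ? ?|p /l_gen [s [sg Sigma_sg [_ ->]]]].
    exact: sfilt_word_ball_mono.
  have [b sb] := generates_word_ball gen s.
  by exists b; apply: in_Rspan_gen; exists s, sg.
by exists b; apply: in_Rspan_lincomb.
Qed.

Lemma sfilt_act_word_ball (gens : seq G) (S : G -> Prop) s b y :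
  is_RG_action act -> S s -> sfilt act Sigma (word_ball gens b) y ->
  sfilt act Sigma (enlarge gens S b) (act s y).
Proof.
move=> [act_lin _ actM] Ss; apply: in_Rspan_image (act_lin s) _.
move=> _ [t [sg Sigma_sg [tb ->]]]; apply: in_Rspan_gen.
exists (s * t)%g, sg => //; rewrite actM; split => //.
exact: word_ball_enlarge.
Qed.

End Filtration.

Unset Implicit Arguments.
Theorem lemma2p4 (R : pzRingType) (G : groupType) (gens : seq G)
    (F F' : lmodType R) (act : G -> F -> F) (act' : G -> F' -> F')
    (SigmaF : seq F) (SigmaF' : seq F') (phi : F -> F') :
  noetherian R ->
  generates gens ->
  is_RG_action act -> is_RG_action act' ->
  RG_generates act SigmaF -> RG_generates act' SigmaF' ->
  is_RG_hom act act' phi ->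
  boundedly_controlled gens (sfilt act SigmaF) (sfilt act' SigmaF') phi.
Proof.
move=> _ gen _ act'_action _ SigmaF'_gen [phi_lin phi_act].
have [b phi_Sigma] : exists b, forall sg, sg \in SigmaF ->
    sfilt act' SigmaF' (word_ball gens b) (phi sg).
  apply: uniform_nat_bound => [? ? ?|sg _]; first exact: sfilt_word_ball_mono.
  exact: sfilt_word_ball.
exists b => S x /(in_Rspan_image phi_lin); apply.
move=> _ [s [sg Sigma_sg [Ss ->]]]; rewrite phi_act.
exact: sfilt_act_word_ball (phi_Sigma _ Sigma_sg).
Qed.
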